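(* Let $A=[a_1,\ldots,a_n]$ and $B=[b_1,\ldots,b_n]$ be matrices in $\mathbb{R}^{m,n}$ whose columns have Euclidean norm $1$, and suppose $\mathcal{M}_D(A,B)\ne 1$. Then \[ \mathcal{M}(A+B)\le\frac{\mathcal{M}(A)+2\mathcal{M}_{OD}(A,B)+\mathcal{M}(B)}{2\bigl(1-\mathcal{M}_D(A,B)\bigr)}. \]
   Context: For $C=[c_1,\ldots,c_n]$ with columns of norm $1$, the mutual incoherence is $\mathcal{M}(C)=\max_{i\ne j}|\langle c_i,c_j\rangle|$. For $A+B$, whose columns $a_i+b_i$ are nonzero but not necessarily normalized, $\mathcal{M}(A+B)$ means the mutual incoherence of the column-normalized matrix, i.e. $\max_{i\ne j}\frac{|\langle a_i+b_i,a_j+b_j\rangle|}{\|a_i+b_i\|_2\|a_j+b_j\|_2}$. The off-diagonal mutual incoherence is $\mathcal{M}_{OD}(A,B)=\max_{i\ne j}|\langle a_i,b_j\rangle|$ and the diagonal mutual incoherence is $\mathcal{M}_D(A,B)=\max_i|\langle a_i,b_i\rangle|$. *)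

From mathcomp Require Import all_boot all_order all_algebra.
Set Implicit Arguments. Unset Strict Implicit. Unset Printing Implicit Defensive.
Import Order.TTheory GRing.Theory Num.Theory.
Local Open Scope ring_scope.

Definition colip (R : rcfType) (m n : nat) (A B : 'M[R]_(m, n)) (i j : 'I_n) : R :=
  \sum_(k < m) A k i * B k j.

Definition colnorm (R : rcfType) (m n : nat) (A : 'M[R]_(m, n)) (i : 'I_n) : R :=
  Num.sqrt (colip A A i i).

(* mutual incoherence of the column-normalized matrix:
   max_{i<>j} |<c_i,c_j>| / (||c_i|| ||c_j||)  (0 if n <= 1).
   For matrices with unit-norm columns this is max_{i<>j} |<c_i,c_j>|. *)
Definition mutual_incoherence (R : rcfType) (m n : nat) (C : 'M[R]_(m, n)) : R :=
  \big[Num.max/0]_(ij : 'I_n * 'I_n | ij.1 != ij.2)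
     (`|colip C C ij.1 ij.2| / (colnorm C ij.1 * colnorm C ij.2)).

Definition mutual_incoherence_OD (R : rcfType) (m n : nat) (A B : 'M[R]_(m, n)) : R :=
  \big[Num.max/0]_(ij : 'I_n * 'I_n | ij.1 != ij.2) `|colip A B ij.1 ij.2|.

Definition mutual_incoherence_D (R : rcfType) (m n : nat) (A B : 'M[R]_(m, n)) : R :=
  \big[Num.max/0]_(i : 'I_n) `|colip A B i i|.

(* For unit columns, ||a_i + b_i||^2 = 2 + 2<a_i, b_i> >= 2 (1 - M_D(A, B)), and
   <a_i + b_i, a_j + b_j> splits into four inner products bounded by M(A),
   M_OD(A, B) (twice) and M(B).  Since |<a_i, b_i>| <= 1, the hypothesis
   M_D(A, B) <> 1 means M_D(A, B) < 1, so the denominator is positive. *)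
From mathcomp Require Import all_boot all_order all_algebra.
From mathcomp Require Import lra.
Import Order.TTheory GRing.Theory Num.Theory.
Local Open Scope ring_scope.

Lemma le_sqrtrM (R : rcfType) (c x y : R) :
  0 <= c -> c <= x -> c <= y -> c <= Num.sqrt x * Num.sqrt y.
Proof.
move=> c_ge0 cx cy; rewrite -[c in c <= _]sqr_sqrtr // expr2.
by apply: ler_pM; rewrite ?sqrtr_ge0 ?ler_wsqrtr.
Qed.

Lemma ler_pdivM (R : realFieldType) (x y N c : R) :
  0 <= x -> x <= N -> 0 < c -> c <= y -> x / y <= N / c.
Proof.
move=> x_ge0 xN c_gt0 cy; have y_gt0 := lt_le_trans c_gt0 cy.
apply: ler_pM => //; first by rewrite invr_ge0 ltW.
by rewrite lef_pV2 ?posrE.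
Qed.

Section ColumnInnerProduct.
Context {R : rcfType} {m n : nat}.
Implicit Types (A B C : 'M[R]_(m, n)) (i j : 'I_n).

Lemma colipDl A B C i j : colip (A + B) C i j = colip A C i j + colip B C i j.
Proof. by rewrite /colip -big_split; apply: eq_bigr => k _; rewrite !mxE mulrDl. Qed.

Lemma colipDr A B C i j : colip C (A + B) i j = colip C A i j + colip C B i j.
Proof. by rewrite /colip -big_split; apply: eq_bigr => k _; rewrite !mxE mulrDr. Qed.

Lemma colipNl A C i j : colip (- A) C i j = - colip A C i j.
Proof. by rewrite /colip -sumrN; apply: eq_bigr => k _; rewrite !mxE mulNr. Qed.

Lemma colipNr A C i j : colip C (- A) i j = - colip C A i j.
Proof. by rewrite /colip -sumrN; apply: eq_bigr => k _; rewrite !mxE mulrN. Qed.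

Lemma colipC A B i j : colip A B i j = colip B A j i.
Proof. by rewrite /colip; apply: eq_bigr => k _; rewrite mulrC. Qed.

Lemma colip_ge0 A i : 0 <= colip A A i i.
Proof. by rewrite /colip sumr_ge0 // => k _; rewrite -expr2 sqr_ge0. Qed.

Lemma colip_colnorm1 A i : colnorm A i = 1 -> colip A A i i = 1.
Proof. by move=> A_i1; rewrite -[LHS]sqr_sqrtr ?colip_ge0 // -/(colnorm A i) A_i1 expr1n. Qed.

Lemma colip_addmx A B i j :
  colip (A + B) (A + B) i j =
  colip A A i j + colip A B i j + colip A B j i + colip B B i j.
Proof. by rewrite !colipDl !colipDr (colipC B A) !addrA. Qed.

Lemma abs_colip_unit_le1 A B i :
  colnorm A i = 1 -> colnorm B i = 1 -> `|colip A B i i| <= 1.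
Proof.
move=> A_i1 B_i1.
(* 0 <= ||a_i +- b_i||^2 = 2 +- 2 <a_i, b_i> *)
have := colip_ge0 (A + B) i; have := colip_ge0 (A - B) i.
rewrite !colipDl !colipDr !colipNl !colipNr (colipC B A) !colip_colnorm1 //.
by move=> hD hS; rewrite ler_norml; apply/andP; split; lra.
Qed.

End ColumnInnerProduct.

Section IncoherenceBounds.
Context {R : rcfType} {m n : nat}.
Implicit Types (A B C : 'M[R]_(m, n)) (i j : 'I_n).

Lemma mutual_incoherence_ge0 C : 0 <= mutual_incoherence C.
Proof. exact: bigmax_ge_id. Qed.

Lemma mutual_incoherence_OD_ge0 A B : 0 <= mutual_incoherence_OD A B.
Proof. exact: bigmax_ge_id. Qed.

Lemma abs_colip_le_mutual_incoherence C i j :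
  (forall k, colnorm C k = 1) -> i != j ->
  `|colip C C i j| <= mutual_incoherence C.
Proof.
move=> C1 ij; have := le_bigmax_cond 0 (P := fun ij : 'I_n * 'I_n => ij.1 != ij.2)
  (fun ij => `|colip C C ij.1 ij.2| / (colnorm C ij.1 * colnorm C ij.2)) (j := (i, j)) ij.
by rewrite /= !C1 mulr1 divr1.
Qed.

Lemma abs_colip_le_mutual_incoherence_OD A B i j :
  i != j -> `|colip A B i j| <= mutual_incoherence_OD A B.
Proof.
exact: (le_bigmax_cond 0 (P := fun ij : 'I_n * 'I_n => ij.1 != ij.2)
  (fun ij => `|colip A B ij.1 ij.2|) (j := (i, j))).
Qed.

Lemma abs_colip_le_mutual_incoherence_D A B i :
  `|colip A B i i| <= mutual_incoherence_D A B.
Proof. exact: (le_bigmax 0 (fun i => `|colip A B i i|)). Qed.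

Lemma mutual_incoherence_D_le1 A B :
  (forall i, colnorm A i = 1) -> (forall i, colnorm B i = 1) ->
  mutual_incoherence_D A B <= 1.
Proof. by move=> A1 B1; apply: bigmax_le => // i _; apply: abs_colip_unit_le1. Qed.

End IncoherenceBounds.

Section UnitColumns.
Context {R : rcfType} {m n : nat}.
Variables (A B : 'M[R]_(m, n)).
Hypotheses (A1 : forall i, colnorm A i = 1) (B1 : forall i, colnorm B i = 1).

Lemma colip_addmx_diag_ge i :
  2 * (1 - mutual_incoherence_D A B) <= colip (A + B) (A + B) i i.
Proof.
rewrite colip_addmx !colip_colnorm1 //.
have := abs_colip_le_mutual_incoherence_D A B i.
by rewrite ler_norml => /andP[ge_MD _]; lra.
Qed.

Lemma colnorm_addmx_mul_ge i j :
  2 * (1 - mutual_incoherence_D A B) <= colnorm (A + B) i * colnorm (A + B) j.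
Proof.
apply: le_sqrtrM; rewrite ?colip_addmx_diag_ge //.
by rewrite mulr_ge0 // subr_ge0 mutual_incoherence_D_le1.
Qed.

Lemma abs_colip_addmx_offdiag_le i j : i != j ->
  `|colip (A + B) (A + B) i j| <=
    mutual_incoherence A + 2 * mutual_incoherence_OD A B + mutual_incoherence B.
Proof.
move=> ij; rewrite colip_addmx.
have hA := abs_colip_le_mutual_incoherence A i j A1 ij.
have hB := abs_colip_le_mutual_incoherence B i j B1 ij.
have hAB := abs_colip_le_mutual_incoherence_OD A B i j ij.
have hBA : `|colip A B j i| <= mutual_incoherence_OD A B.
  by apply: abs_colip_le_mutual_incoherence_OD; rewrite eq_sym.
have := ler_normD (colip A A i j + colip A B i j) (colip A B j i + colip B B i j).
have := ler_normD (colip A A i j) (colip A B i j).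
have := ler_normD (colip A B j i) (colip B B i j).
by rewrite !addrA; lra.
Qed.

End UnitColumns.

Theorem theorem4p4 (R : rcfType) (m n : nat) (A B : 'M[R]_(m, n)) :
  (forall i : 'I_n, colnorm A i = 1) ->
  (forall i : 'I_n, colnorm B i = 1) ->
  mutual_incoherence_D A B != 1 ->
  mutual_incoherence (A + B) <=
    (mutual_incoherence A + 2 * mutual_incoherence_OD A B + mutual_incoherence B)
    / (2 * (1 - mutual_incoherence_D A B)).
Proof.
move=> A1 B1 MD_neq1.
have den_gt0 : 0 < 2 * (1 - mutual_incoherence_D A B).
  by rewrite mulr_gt0 // subr_gt0 lt_neqAle MD_neq1 mutual_incoherence_D_le1.
apply: bigmax_le => [|[i j] /= ij].
  apply: divr_ge0; last exact: ltW.
  have := mutual_incoherence_ge0 A; have := mutual_incoherence_ge0 B.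
  by have := mutual_incoherence_OD_ge0 A B; lra.
apply: ler_pdivM => //; first exact: abs_colip_addmx_offdiag_le.
exact: colnorm_addmx_mul_ge.
Qed.
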